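(* Let $n\geq 2$ be finite. Then $TA_n=\mathbf{HSP}\,RTA_n=PTA_n$. In particular every $\mathfrak{A}\models\Sigma_n$ is isomorphic to a subdirect product of algebras $\wp(D)$ with $D$ permutable, and for every nonzero $a\in\mathfrak A$ there is a homomorphism $h:\mathfrak{A}\to\wp(S_n)$ with $h(a)\neq\emptyset$, where $S_n\subseteq{}^nn$ is the set of permutations of $n$.
   Context: For a set $U$, $[i,j]$ is the transposition of $n$ swapping $i,j$; the full transposition set algebra with base $U$ is $\langle\mathcal{P}({}^nU);\cap,-,S_{ij}\rangle_{i\neq j\in n}$ with $S_{ij}(X)=\{q\in{}^nU:q\circ[i,j]\in X\}$; $RTA_n$ is the class of subalgebras of direct products of such algebras. A set $D\subseteq{}^nU$ is permutable if $s\in D$ implies $s\circ[i,j]\in D$ for all $i\neq j<n$. For permutable $D$, $\wp(D)=\langle\mathcal{P}(D);\cap,-,S_{ij}\rangle$ with complement relative to $D$ and $S_{ij}(X)=\{q\in D:q\circ[i,j]\in X\}$; $PTA_n=\mathbf{SP}\{\wp(D):D\text{ permutable}\}$. $\Sigma_n$ is the following set of equations in the signature $(\wedge,-,s_{ij})_{i\neq j<n}$: the Boolean algebra axioms; $s_{ij}(x\wedge y)=s_{ij}x\wedge s_{ij}y$; $s_{ij}(-x)=-s_{ij}x$; and $t_1(x)=t_2(x)$ for all words $t_1=s_{i_1j_1}\cdots s_{i_kj_k}$, $t_2=s_{k_1l_1}\cdots s_{k_ml_m}$ with $[i_1,j_1]\circ\dots\circ[i_k,j_k]=[k_1,l_1]\circ\dots\circ[k_m,l_m]$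 in $S_n$ (the paper gives these via the finite Coxeter presentation of $S_n$: $s_{ij}s_{ij}x=x$, $s_{i,i+1}s_{j,j+1}x=s_{j,j+1}s_{i,i+1}x$ for $|i-j|\geq2$, $s_{i,i+1}s_{i+1,i+2}s_{i,i+1}x=s_{i+1,i+2}s_{i,i+1}s_{i+1,i+2}x$). $TA_n=\mathbf{Mod}(\Sigma_n)$. *)

From mathcomp Require Import all_boot all_fingroup.
Set Implicit Arguments. Unset Strict Implicit. Unset Printing Implicit Defensive.

(* The operation s is given
   for all pairs (i,j); only pairs with i != j are part of the signature:
   axioms and homomorphisms only mention s i j with i != j. *)
Record talg (n : nat) := TAlg {
  carrier :> Type;
  meet : carrier -> carrier -> carrier;
  compl : carrier -> carrier;
  subst : 'I_n -> 'I_n -> carrier -> carrier }.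

Arguments meet {n A} : rename.
Arguments compl {n A} : rename.
Arguments subst {n A} : rename.

Definition join {n} {A : talg n} (x y : A) : A := compl (meet (compl x) (compl y)).

Definition is_hom {n} (A B : talg n) (f : A -> B) : Prop :=
  (forall x y, f (meet x y) = meet (f x) (f y)) /\
  (forall x, f (compl x) = compl (f x)) /\
  (forall (i j : 'I_n), i != j -> forall x, f (subst i j x) = subst i j (f x)).

Definition is_iso {n} (A B : talg n) (f : A -> B) : Prop :=
  is_hom f /\ bijective f.

Definition word_ok {n} (w : seq ('I_n * 'I_n)) : bool :=
  all (fun p => p.1 != p.2) w.

Definition word_perm {n} (w : seq ('I_n * 'I_n)) : 'S_n :=
  foldr (fun p acc => (acc * tperm p.1 p.2)%g) 1%g w.
(* note: (s * t)%g x = t (s x), so word_perm [:: a; b] = [a] o [b] *)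

Definition word_apply {n} {A : talg n} (w : seq ('I_n * 'I_n)) (x : A) : A :=
  foldr (fun p y => subst p.1 p.2 y) x w.

Definition Sigma {n} (A : talg n) : Prop :=
  (forall x y : A, meet x y = meet y x) /\
  (forall x y z : A, meet x (meet y z) = meet (meet x y) z) /\
  (forall x y : A, join x y = join y x) /\
  (forall x y z : A, join x (join y z) = join (join x y) z) /\
  (forall x y : A, meet x (join x y) = x) /\
  (forall x y : A, join x (meet x y) = x) /\
  (forall x y z : A, meet x (join y z) = join (meet x y) (meet x z)) /\
  (forall x y : A, meet x (compl x) = meet y (compl y)) /\
  (forall x y : A, join x (compl x) = join y (compl y)) /\
  (forall (i j : 'I_n), i != j -> forall x y : A,
      subst i j (meet x y) = meet (subst i j x) (subst i j y)) /\
  (forall (i j : 'I_n), i != j -> forall x : A,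
      subst i j (compl x) = compl (subst i j x)) /\
  (forall w1 w2 : seq ('I_n * 'I_n), word_ok w1 -> word_ok w2 ->
      word_perm w1 = word_perm w2 -> forall x : A, word_apply w1 x = word_apply w2 x).

Definition aclass (n : nat) := talg n -> Prop.

Definition prod_alg {n} (I : Type) (F : I -> talg n) : talg n :=
  @TAlg n (forall i, F i)
    (fun x y i => meet (x i) (y i))
    (fun x i => compl (x i))
    (fun a b x i => subst a b (x i)).

Definition Hop {n} (K : aclass n) : aclass n := fun A =>
  exists B : talg n, K B /\ exists f : B -> A, is_hom f /\ (forall y, exists x, f x = y).
Definition Sop {n} (K : aclass n) : aclass n := fun A =>
  exists B : talg n, K B /\ exists f : A -> B, is_hom f /\ injective f.
Definition Pop {n} (K : aclass n) : aclass n := fun A =>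
  exists (I : Type) (F : I -> talg n), (forall i, K (F i)) /\
    exists f : A -> prod_alg F, is_iso f.

Definition fsa (n : nat) (U : Type) : talg n :=
  @TAlg n (('I_n -> U) -> Prop)
    (fun X Y q => X q /\ Y q)
    (fun X q => ~ X q)
    (fun i j X q => X (fun k => q (tperm i j k))).

Definition FullSetAlgs (n : nat) : aclass n := fun A =>
  exists (U : Type) (f : A -> fsa n U), is_iso f.

Arguments fsa n U : clear implicits.
Arguments FullSetAlgs n _ : clear implicits.

Definition RTA (n : nat) : aclass n := Sop (Pop (FullSetAlgs n)).

Definition permutable {n} {U : Type} (D : ('I_n -> U) -> Prop) : Prop :=
  forall s, D s -> forall i j : 'I_n, i != j -> D (fun k => s (tperm i j k)).

Definition wp (n : nat) (U : Type) (D : ('I_n -> U) -> Prop) : talg n :=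
  @TAlg n {X : ('I_n -> U) -> Prop | forall q, X q -> D q}
    (fun X Y => exist (fun Z : ('I_n -> U) -> Prop => forall q, Z q -> D q) (fun q => proj1_sig X q /\ proj1_sig Y q)
                  (fun q H => proj2_sig X q (proj1 H)))
    (fun X => exist (fun Z : ('I_n -> U) -> Prop => forall q, Z q -> D q) (fun q => D q /\ ~ proj1_sig X q) (fun q H => proj1 H))
    (fun i j X => exist (fun Z : ('I_n -> U) -> Prop => forall q, Z q -> D q) (fun q => D q /\ proj1_sig X (fun k => q (tperm i j k)))
                  (fun q H => proj1 H)).

Arguments wp n U D : clear implicits.

Definition WpAlgs (n : nat) : aclass n := fun A =>
  exists (U : Type) (D : ('I_n -> U) -> Prop), permutable D /\
    exists f : A -> wp n U D, is_iso f.

Arguments WpAlgs n _ : clear implicits.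

Definition TA (n : nat) : aclass n := fun A => Sigma A.
Definition PTA (n : nat) : aclass n := Sop (Pop (WpAlgs n)).

Definition Sn_set (n : nat) : ('I_n -> 'I_n) -> Prop := fun q => bijective q.

Arguments RTA n _ : clear implicits.
Arguments TA n _ : clear implicits.
Arguments PTA n _ : clear implicits.
Arguments Sn_set n _ : clear implicits.

From mathcomp Require Import all_boot all_fingroup.
From mathcomp Require Import boolp classical_sets.
Set Implicit Arguments. Unset Strict Implicit. Unset Printing Implicit Defensive.

(* For an ultrafilter F of the Boolean reduct of A |= Sigma_n, the map
   x |-> {q in S_n | s_q x in F} is a homomorphism A -> wp(S_n): Sigma_n makes
   s_q depend only on the permutation q, and s_(q o [i,j]) x = s_q (s_ij x).
   Ultrafilters separate points, so A embeds into a power of wp(S_n), i.e.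
   TA_n <= PTA_n.  As wp(S_n) is the image of the full set algebra on ^n n under
   X |-> X /\ S_n, pulling the embedding back along this surjection exhibits A as
   a homomorphic image of a subalgebra of a power of full set algebras, whence
   TA_n <= HSP RTA_n.  The converse inclusions hold since Sigma_n is a set of
   equations valid in every full set algebra, hence in every wp(D). *)

Section BooleanReduct.
Variables (n : nat) (A : talg n).
Hypothesis HS : Sigma A.
Implicit Types x y z a : A.
Local Open Scope classical_set_scope.

Lemma meetC x y : meet x y = meet y x.
Proof. by case: HS. Qed.

Lemma meetA x y z : meet x (meet y z) = meet (meet x y) z.
Proof. by case: HS => _ []. Qed.

Lemma joinC x y : join x y = join y x.
Proof. by case: HS => _ [_ []]. Qed.

Lemma meet_absorb x y : meet x (join x y) = x.
Proof. by case: HS => _ [_ [_ [_ []]]]. Qed.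

Lemma join_absorb x y : join x (meet x y) = x.
Proof. by case: HS => _ [_ [_ [_ [_ []]]]]. Qed.

Lemma meet_joinr x y z : meet x (join y z) = join (meet x y) (meet x z).
Proof. by case: HS => _ [_ [_ [_ [_ [_ []]]]]]. Qed.

Lemma zero_uniq x y : meet x (compl x) = meet y (compl y).
Proof. by case: HS => _ [_ [_ [_ [_ [_ [_ []]]]]]]. Qed.

Lemma one_uniq x y : join x (compl x) = join y (compl y).
Proof. by case: HS => _ [_ [_ [_ [_ [_ [_ [_ []]]]]]]]. Qed.

Lemma meetxx x : meet x x = x.
Proof. by rewrite -{2}(join_absorb x x) meet_absorb. Qed.

Lemma meet_zero x y : meet x (meet y (compl y)) = meet y (compl y).
Proof. by rewrite (zero_uniq y x) meetA meetxx. Qed.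

Lemma join_zero x y : join (meet y (compl y)) x = x.
Proof. by rewrite joinC (zero_uniq y x) join_absorb. Qed.

Lemma meet_split x y : join (meet x y) (meet x (compl y)) = x.
Proof. by rewrite -meet_joinr (one_uniq y x) meet_absorb. Qed.

Definition below x y := meet x y = x.

Lemma below_refl x : below x x.
Proof. exact: meetxx. Qed.

Lemma below_trans x y z : below x y -> below y z -> below x z.
Proof. by rewrite /below => xy yz; rewrite -xy -meetA yz. Qed.

Lemma below_antisym x y : below x y -> below y x -> x = y.
Proof. by rewrite /below => xy yx; rewrite -xy -{2}yx meetC. Qed.

Lemma below_meetl x y : below (meet x y) x.
Proof. by rewrite /below (meetC x y) -meetA meetxx. Qed.

Lemma below_meetr x y : below (meet x y) y.
Proof. by rewrite /below -meetA meetxx. Qed.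

Lemma below_meet x y z : below x y -> below x z -> below x (meet y z).
Proof. by rewrite /below meetA => -> ->. Qed.

Lemma below_zero x y : below x (meet y (compl y)) -> x = meet y (compl y).
Proof. by rewrite /below meet_zero => <-. Qed.

Lemma below_of_disj x y : meet x (compl y) = meet y (compl y) -> below x y.
Proof. by move=> xy0; rewrite /below -{2}(meet_split x y) xy0 joinC join_zero. Qed.

Lemma below_compl_of_disj x y : meet x y = meet y (compl y) -> below x (compl y).
Proof. by move=> xy0; rewrite /below -{2}(meet_split x y) xy0 join_zero. Qed.

Record proper_filter (X : set A) : Prop := ProperFilter {
  filter_up : forall x y, X x -> below x y -> X y;
  filter_meet : forall x y, X x -> X y -> X (meet x y);
  filter_proper : forall x, ~ X (meet x (compl x)) }.

Record ultrafilter (U : set A) : Prop := Ultrafilter {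
  ultra_meet : forall x y, U (meet x y) <-> U x /\ U y;
  ultra_compl : forall x, U (compl x) <-> ~ U x }.

Lemma principal_filter a : a <> meet a (compl a) -> proper_filter (below a).
Proof.
move=> a_neq0; split.
- exact: below_trans.
- exact: below_meet.
- by move=> x /below_zero a0; apply: a_neq0; rewrite {1}a0 (zero_uniq x a).
Qed.

Lemma bigcup_chain_filter (F : set (set A)) :
  (forall X, F X -> proper_filter X) -> total_on F subset ->
  proper_filter (\bigcup_(X in F) X).
Proof.
move=> Ffilter Fchain; split.
- by move=> x y [X FX Xx] xy; exists X => //; apply: filter_up (Ffilter X FX) _ _ Xx xy.
- move=> x y [X FX Xx] [Y FY Yy].
  have [XY|YX] := Fchain X Y FX FY.
  + by exists Y => //; apply: filter_meet (Ffilter Y FY) _ _ (XY _ Xx) Yy.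
  + by exists X => //; apply: filter_meet (Ffilter X FX) _ _ Xx (YX _ Yy).
- by move=> x [X FX]; apply: filter_proper (Ffilter X FX) x.
Qed.

Definition filter_add (X : set A) x : set A :=
  fun y => exists2 f, X f & below (meet f x) y.

Lemma filter_add_proper X x :
  proper_filter X -> ~ X (compl x) -> proper_filter (filter_add X x).
Proof.
move=> fX Xx'; split.
- by move=> y z [f Xf fy] yz; exists f => //; apply: below_trans yz.
- move=> y z [f Xf fy] [g Xg gz]; exists (meet f g); first exact: filter_meet fX _ _ Xf Xg.
  have fgx_fx : below (meet (meet f g) x) (meet f x).
    apply: below_meet (below_meetr _ _).
    exact: below_trans (below_meetl _ _) (below_meetl _ _).
  have fgx_gx : below (meet (meet f g) x) (meet g x).
    apply: below_meet (below_meetr _ _).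
    exact: below_trans (below_meetl _ _) (below_meetr _ _).
  by apply: below_meet; [apply: below_trans fy | apply: below_trans gz].
- move=> y [f Xf /below_zero fx0]; apply: Xx'; apply: filter_up fX _ _ Xf _.
  by apply: below_compl_of_disj; rewrite fx0 (zero_uniq y x).
Qed.

Lemma maximal_filter_ultra (M : set A) :
  proper_filter M -> (exists a, M a) ->
  (forall Y, proper_filter Y -> M `<=` Y -> Y `<=` M) -> ultrafilter M.
Proof.
move=> fM [a Ma] maxM; split => [x y|x]; split.
- move=> Mxy; split; apply: filter_up fM _ _ Mxy _.
  + exact: below_meetl.
  + exact: below_meetr.
- by case=> Mx My; apply: filter_meet fM _ _ Mx My.
- by move=> Mx' Mx; apply: (filter_proper fM (filter_meet fM Mx Mx')).
- move=> Mx; apply: contrapT => Mx'; apply: Mx.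
  apply: (maxM _ (filter_add_proper fM Mx')).
    by move=> y My; exists y => //; apply: below_meetl.
  by exists a => //; apply: below_meetr.
Qed.

Lemma ultrafilter_exists a :
  a <> meet a (compl a) -> exists2 U, ultrafilter U & U a.
Proof.
move=> a_neq0.
(* Asking for "X nonempty -> X a" rather than "X a" lets the empty chain have
   an upper bound, namely its empty union. *)
pose P (X : set A) := proper_filter X /\ forall x, X x -> X a.
have [M [[fM Ma_of] maxM]] : exists M, P M /\ forall Y, M `<` Y -> ~ P Y.
  apply: Zorn_bigcup => F FP Fchain; split.
    by apply: bigcup_chain_filter => // X /FP[].
  by move=> x [X FX Xx]; exists X => //; apply: (FP X FX).2 Xx.
have Ma : M a.
  apply: contrapT => Ma; apply: (maxM (below a)); last first.
    by split; [exact: principal_filter|move=> *; apply: below_refl].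
  split; first by move=> x /Ma_of.
  by move=> /(_ a (below_refl a)).
exists M => //; apply: maximal_filter_ultra => //; first by exists a.
move=> Y fY MY y Yy; apply: contrapT => My.
by apply: (maxM Y); [split => // /(_ y Yy)|split => // x _; apply: MY].
Qed.

Lemma ultrafilter_not_below x y : ~ below x y -> exists2 U, ultrafilter U & U x /\ ~ U y.
Proof.
move=> xy; have [|U uU] := @ultrafilter_exists (meet x (compl y)).
  by move=> xy0; apply/xy/below_of_disj; rewrite {1}xy0; apply: zero_uniq.
by rewrite ultra_meet // ultra_compl //; exists U.
Qed.

Lemma ultrafilter_sep x y : x <> y -> exists2 U, ultrafilter U & ~ (U x <-> U y).
Proof.
move=> xy.
have [xley|/ultrafilter_not_below[U uU [Ux Uy]]] := pselect (below x y); last first.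
  by exists U => // xyU; apply/Uy/xyU.
have [ylex|/ultrafilter_not_below[U uU [Uy Ux]]] := pselect (below y x); last first.
  by exists U => // xyU; apply/Ux/xyU.
by case: xy; apply: below_antisym.
Qed.

End BooleanReduct.

Lemma word_permE n (w : seq ('I_n * 'I_n)) :
  word_perm w = (\prod_(t <- rev w) tperm t.1 t.2)%g.
Proof.
elim: w => [|t w IHw] /=; first by rewrite big_nil.
by rewrite rev_cons -cats1 big_cat big_seq1 IHw.
Qed.

Lemma word_perm_rcons n (w : seq ('I_n * 'I_n)) i j :
  word_perm (rcons w (i, j)) = (tperm i j * word_perm w)%g.
Proof. by rewrite !word_permE rev_rcons big_cons. Qed.

Lemma word_apply_rcons n (A : talg n) (w : seq ('I_n * 'I_n)) i j (x : A) :
  word_apply (rcons w (i, j)) x = word_apply w (subst i j x).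
Proof. by rewrite /word_apply -cats1 foldr_cat. Qed.

Definition perm_word n (p : 'S_n) : seq ('I_n * 'I_n) := rev (sval (prod_tpermP p)).

Lemma perm_word_ok n (p : 'S_n) : word_ok (perm_word p).
Proof. by rewrite /word_ok /perm_word all_rev; case: prod_tpermP. Qed.

Lemma perm_wordK n (p : 'S_n) : word_perm (perm_word p) = p.
Proof. by rewrite word_permE /perm_word revK; case: prod_tpermP. Qed.

Definition subst_perm n (A : talg n) (p : 'S_n) (x : A) : A := word_apply (perm_word p) x.

Section PermutationAction.
Variables (n : nat) (A : talg n).
Hypothesis HS : Sigma A.
Implicit Types (x y : A) (p : 'S_n) (w : seq ('I_n * 'I_n)).

Lemma word_apply_meet w x y : word_ok w ->
  word_apply w (meet x y) = meet (word_apply w x) (word_apply w y).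
Proof.
case: HS => _ [_ [_ [_ [_ [_ [_ [_ [_ [substM _]]]]]]]]].
by elim: w => //= t w IHw /andP[t_ok w_ok]; rewrite IHw // substM.
Qed.

Lemma word_apply_compl w x : word_ok w ->
  word_apply w (compl x) = compl (word_apply w x).
Proof.
case: HS => _ [_ [_ [_ [_ [_ [_ [_ [_ [_ [substC _]]]]]]]]]].
by elim: w => //= t w IHw /andP[t_ok w_ok]; rewrite IHw // substC.
Qed.

Lemma subst_permE w p x : word_ok w -> word_perm w = p -> subst_perm p x = word_apply w x.
Proof.
case: HS => _ [_ [_ [_ [_ [_ [_ [_ [_ [_ [_ words]]]]]]]]]] w_ok <-.
by apply: words => //; [exact: perm_word_ok | exact: perm_wordK].
Qed.

Lemma subst_perm1 x : subst_perm 1 x = x.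
Proof. by rewrite (@subst_permE [::]). Qed.

Lemma subst_perm_tperm (i j : 'I_n) p x : i != j ->
  subst_perm (tperm i j * p) x = subst_perm p (subst i j x).
Proof.
move=> ij; rewrite [RHS]/subst_perm -word_apply_rcons.
apply: subst_permE; last by rewrite word_perm_rcons perm_wordK.
by rewrite [word_ok _]all_rcons /= ij; apply: perm_word_ok.
Qed.

Lemma subst_perm_meet p x y : subst_perm p (meet x y) = meet (subst_perm p x) (subst_perm p y).
Proof. exact/word_apply_meet/perm_word_ok. Qed.

Lemma subst_perm_compl p x : subst_perm p (compl x) = compl (subst_perm p x).
Proof. exact/word_apply_compl/perm_word_ok. Qed.

End PermutationAction.

Definition fun_perm n (q : 'I_n -> 'I_n) : 'S_n := insubd (1 : 'S_n)%g [ffun k => q k].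

Lemma fun_permE n (q : 'I_n -> 'I_n) : injective q -> fun_perm q =1 q.
Proof.
move=> q_inj k; rewrite -pvalE /fun_perm insubdK ?ffunE //.
by apply/injectiveP => u v; rewrite !ffunE => /q_inj.
Qed.

Lemma fun_perm_id n : fun_perm (@id 'I_n) = 1%g.
Proof. by apply/permP => k; rewrite fun_permE // perm1. Qed.

Lemma fun_perm_tperm n (q : 'I_n -> 'I_n) (i j : 'I_n) : injective q ->
  fun_perm (fun k => q (tperm i j k)) = (tperm i j * fun_perm q)%g.
Proof.
move=> q_inj; apply/permP => k; rewrite permM !fun_permE //.
exact/inj_comp/(can_inj (tpermK i j)).
Qed.

Lemma permutable_Sn n : permutable (Sn_set n).
Proof. by move=> q q_bij i j _; apply: bij_comp q_bij (inv_bij (tpermK i j)). Qed.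

Section Homomorphisms.
Variable n : nat.

Lemma hom_join (A B : talg n) (f : A -> B) : is_hom f -> forall x y : A,
  f (join x y) = join (f x) (f y).
Proof. by case=> fM [fC _] x y; rewrite /join fC fM !fC. Qed.

Lemma hom_word_apply (A B : talg n) (f : A -> B) : is_hom f -> forall w (x : A),
  word_ok w -> f (word_apply w x) = word_apply w (f x).
Proof.
case=> _ [_ fS] w x; elim: w => //= t w IHw /andP[t_ok w_ok].
by rewrite fS // IHw.
Qed.

Lemma iso_id (A : talg n) : is_iso (@id A).
Proof. by split; [split; [|split] | exists id]. Qed.

Lemma prod_hom I (B : talg n) (F : I -> talg n) (f : forall i, B -> F i) :
  (forall i, is_hom (f i)) -> is_hom ((fun x i => f i x) : B -> prod_alg F).
Proof.
move=> homf; split; [|split] => *; apply: functional_extensionality_dep => i;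
  by case: (homf i) => [fM [fC fS]]; rewrite ?fM ?fC ?fS.
Qed.

Definition prod_map I (F G : I -> talg n) (f : forall i, F i -> G i) (x : prod_alg F) :
  prod_alg G := fun i => f i (x i).

Lemma prod_map_hom I (F G : I -> talg n) (f : forall i, F i -> G i) :
  (forall i, is_hom (f i)) -> is_hom (prod_map f).
Proof.
move=> homf; split; [|split] => *; apply: functional_extensionality_dep => i;
  by case: (homf i) => [fM [fC fS]]; rewrite /prod_map ?fM ?fC ?fS.
Qed.

Lemma prod_map_surj I (F G : I -> talg n) (f : forall i, F i -> G i) :
  (forall i y, exists x, f i x = y) -> forall y, exists x, prod_map f x = y.
Proof.
move=> surjf y; exists (fun i => sval (cid (surjf i (y i)))).
by apply: functional_extensionality_dep => i; rewrite /prod_map; case: cid.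
Qed.

End Homomorphisms.

Section SigmaPreservation.
Variable n : nat.

Lemma Sigma_inj (A B : talg n) (f : A -> B) : is_hom f -> injective f -> Sigma B -> Sigma A.
Proof.
move=> homf f_inj SB; have fJ := hom_join homf; have fW := hom_word_apply homf.
case: homf SB => fM [fC fS] [mC [mA [jC [jA [ab1 [ab2 [dis [z0 [u1 [sM [sC W]]]]]]]]]]].
do 11 try split.
- by move=> x y; apply: f_inj; rewrite !fM mC.
- by move=> x y z; apply: f_inj; rewrite !fM mA.
- by move=> x y; apply: f_inj; rewrite !fJ jC.
- by move=> x y z; apply: f_inj; rewrite !fJ jA.
- by move=> x y; apply: f_inj; rewrite fM fJ ab1.
- by move=> x y; apply: f_inj; rewrite fJ fM ab2.
- by move=> x y z; apply: f_inj; rewrite fM !fJ !fM dis.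
- by move=> x y; apply: f_inj; rewrite !fM !fC (z0 _ (f y)).
- by move=> x y; apply: f_inj; rewrite !fJ !fC (u1 _ (f y)).
- by move=> i j ij x y; apply: f_inj; rewrite fS // !fM sM // !fS.
- by move=> i j ij x; apply: f_inj; rewrite fS // !fC sC // fS.
- by move=> w1 w2 ok1 ok2 e x; apply: f_inj; rewrite !fW //; apply: W.
Qed.

Lemma Sigma_surj (A B : talg n) (f : A -> B) :
  is_hom f -> (forall y, exists x, f x = y) -> Sigma A -> Sigma B.
Proof.
move=> homf f_surj SA; have fJ := hom_join homf; have fW := hom_word_apply homf.
have lift (P : B -> Prop) : (forall x, P (f x)) -> forall y, P y.
  by move=> Pf y; have [x <-] := f_surj y.
case: homf SA => fM [fC fS] [mC [mA [jC [jA [ab1 [ab2 [dis [z0 [u1 [sM [sC W]]]]]]]]]]].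
do 11 try split.
- by do 2 elim/lift=> ?; rewrite -!fM mC.
- by do 3 elim/lift=> ?; rewrite -!fM mA.
- by do 2 elim/lift=> ?; rewrite -!fJ jC.
- by do 3 elim/lift=> ?; rewrite -!fJ jA.
- by do 2 elim/lift=> ?; rewrite -fJ -fM ab1.
- by do 2 elim/lift=> ?; rewrite -fM -fJ ab2.
- by do 3 elim/lift=> ?; rewrite -!fJ -!fM -fJ dis.
- by elim/lift=> x; elim/lift=> y; rewrite -!fC -!fM (z0 x y).
- by elim/lift=> x; elim/lift=> y; rewrite -!fC -!fJ (u1 x y).
- by move=> i j ij; do 2 elim/lift=> ?; rewrite -fM -!fS // -fM sM.
- by move=> i j ij; elim/lift=> ?; rewrite -fC -!fS // -fC sC.
- by move=> w1 w2 ok1 ok2 e; elim/lift=> ?; rewrite -!fW // (W w1 w2).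
Qed.

Lemma word_apply_prod I (F : I -> talg n) w (x : prod_alg F) i :
  word_apply w x i = word_apply w (x i).
Proof. by elim: w => //= t w ->. Qed.

Lemma Sigma_prod I (F : I -> talg n) : (forall i, Sigma (F i)) -> Sigma (prod_alg F).
Proof.
move=> SF; do 11 try split.
all: move=> *; apply: functional_extensionality_dep => i /=.
all: rewrite ?word_apply_prod.
all: case: (SF i) => mC [mA [jC [jA [ab1 [ab2 [dis [z0 [u1 [sM [sC W]]]]]]]]]]; eauto.
Qed.

End SigmaPreservation.

Section SetAlgebras.
Variables (n : nat) (U : Type).

Lemma wp_eq (D : ('I_n -> U) -> Prop) (X Y : wp n U D) :
  (forall q, sval X q <-> sval Y q) -> X = Y.
Proof.
by case: X Y => [X DX] [Y DY] /= XY; apply: eq_exist; apply/funext => q; apply/propext.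
Qed.

Lemma word_apply_fsa w (X : fsa n U) q :
  word_apply w X q = X (fun k => q (word_perm w k)).
Proof.
elim: w q => [|t w IHw] q /=; first by congr X; apply/funext => k; rewrite perm1.
by rewrite IHw; congr X; apply/funext => k; rewrite permM.
Qed.

Lemma Sigma_fsa : Sigma (fsa n U).
Proof.
have fsa_eq (X Y : fsa n U) : (forall q, X q <-> Y q) -> X = Y.
  by move=> XY; apply/funext => q; apply/propext.
do 11 try split.
all: try by move=> x y; apply: fsa_eq => q /=; move: (EM (x q)) (EM (y q)); tauto.
all: try by move=> x y z; apply: fsa_eq => q /=; move: (EM (x q)) (EM (y q)) (EM (z q)); tauto.
all: try by [].
by move=> w1 w2 _ _ e x; apply/funext => q; rewrite !word_apply_fsa e.
Qed.

Definition restrict (D : ('I_n -> U) -> Prop) (X : fsa n U) : wp n U D :=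
  exist (fun Z => forall q, Z q -> D q) (fun q => D q /\ X q) (fun q => @proj1 _ _).

Lemma restrict_hom (D : ('I_n -> U) -> Prop) : permutable D -> is_hom (restrict D).
Proof.
move=> Dperm; split; [|split] => [X Y|X|i j ij X]; apply: wp_eq => q /=; try tauto.
by split=> [[Dq Xq]|[Dq [_ Xq]]]; do ?split => //; apply: Dperm.
Qed.

Lemma restrict_surj (D : ('I_n -> U) -> Prop) (Y : wp n U D) : exists X, restrict D X = Y.
Proof.
exists (sval Y); apply: wp_eq => q /=.
by split=> [[]|Yq] //; split => //; exact: (proj2_sig Y q Yq).
Qed.

Lemma Sigma_wp (D : ('I_n -> U) -> Prop) : permutable D -> Sigma (wp n U D).
Proof. by move=> Dperm; apply: Sigma_surj (restrict_hom Dperm) (@restrict_surj D) Sigma_fsa. Qed.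

End SetAlgebras.

Section ClassOperators.
Variable n : nat.

Definition models_Sigma (K : aclass n) := forall A, K A -> Sigma A.

Lemma Sop_models K : models_Sigma K -> models_Sigma (Sop K).
Proof. by move=> KS A [B [KB [f [f_hom f_inj]]]]; apply: Sigma_inj f_hom f_inj (KS B KB). Qed.

Lemma Hop_models K : models_Sigma K -> models_Sigma (Hop K).
Proof. by move=> KS A [B [KB [f [f_hom f_surj]]]]; apply: Sigma_surj f_hom f_surj (KS B KB). Qed.

Lemma Pop_models K : models_Sigma K -> models_Sigma (Pop K).
Proof.
move=> KS A [I [F [KF [f [f_hom /bij_inj f_inj]]]]].
by apply: Sigma_inj f_hom f_inj _; apply: Sigma_prod => i; apply: KS.
Qed.

Lemma FullSetAlgs_models : models_Sigma (FullSetAlgs n).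
Proof.
by move=> A [U [f [f_hom /bij_inj f_inj]]]; apply: Sigma_inj f_hom f_inj (Sigma_fsa n U).
Qed.

Lemma WpAlgs_models : models_Sigma (WpAlgs n).
Proof.
move=> A [U [D [Dperm [f [f_hom /bij_inj f_inj]]]]].
exact: Sigma_inj f_hom f_inj (Sigma_wp Dperm).
Qed.

Lemma Pop_prod K I (F : I -> talg n) : (forall i, K (F i)) -> Pop K (prod_alg F).
Proof. by move=> KF; exists I, F; split=> //; exists id; apply: iso_id. Qed.

Lemma RTA_fsa U : RTA n (fsa n U).
Proof.
exists (prod_alg (fun _ : unit => fsa n U)); split.
  by apply: Pop_prod => _; exists U, id; apply: iso_id.
exists (fun X _ => X); split; first by split; [|split].
by move=> X Y /(congr1 (fun r => r tt)).
Qed.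

Lemma WpAlgs_wp U (D : ('I_n -> U) -> Prop) : permutable D -> WpAlgs n (wp n U D).
Proof. by move=> Dperm; exists U, D; split=> //; exists id; apply: iso_id. Qed.

End ClassOperators.

Section Pullback.
Variables (n : nat) (A C E : talg n) (f : A -> E) (g : C -> E).
Hypotheses (f_hom : is_hom f) (g_hom : is_hom g).

Definition pullback_car := {p : A * C | f p.1 = g p.2}.

Lemma pullback_meetP (p p' : pullback_car) :
  f (meet (sval p).1 (sval p').1) = g (meet (sval p).2 (sval p').2).
Proof. by case: f_hom g_hom => fM _ [gM _]; rewrite fM gM (svalP p) (svalP p'). Qed.

Lemma pullback_complP (p : pullback_car) : f (compl (sval p).1) = g (compl (sval p).2).
Proof. by case: f_hom g_hom => _ [fC _] [_ [gC _]]; rewrite fC gC (svalP p). Qed.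

Lemma pullback_substP (i j : 'I_n) (p : pullback_car) : i != j ->
  f (subst i j (sval p).1) = g (subst i j (sval p).2).
Proof. by case: f_hom g_hom => _ [_ fS] [_ [_ gS]] ij; rewrite fS // gS // (svalP p). Qed.

(* s_ii is not part of the signature, so it is interpreted by the identity. *)
Definition pullback : talg n :=
  @TAlg n pullback_car
    (fun p p' => exist _ (meet (sval p).1 (sval p').1, meet (sval p).2 (sval p').2)
                         (pullback_meetP p p'))
    (fun p => exist _ (compl (sval p).1, compl (sval p).2) (pullback_complP p))
    (fun i j p => match pselect (i != j) with
      | left ij =>
          exist _ (subst i j (sval p).1, subst i j (sval p).2) (pullback_substP p ij)
      | right _ => p end).

Lemma pullback_fst_hom : is_hom (fun p : pullback => (sval p).1).
Proof. by split; [|split] => // i j ij p /=; case: pselect. Qed.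

Lemma pullback_snd_hom : is_hom (fun p : pullback => (sval p).2).
Proof. by split; [|split] => // i j ij p /=; case: pselect. Qed.

Lemma pullback_snd_inj : injective f -> injective (fun p : pullback => (sval p).2).
Proof.
move=> f_inj [[x c] xc] [[x' c'] x'c'] /= cc'; subst c'; apply: eq_exist.
by congr pair; apply: f_inj; rewrite xc x'c'.
Qed.

Lemma pullback_fst_surj : (forall e, exists c, g c = e) ->
  forall x, exists p : pullback, (sval p).1 = x.
Proof.
by move=> g_surj x; have [c gc] := g_surj (f x); exists (exist _ (x, c) (esym gc)).
Qed.

End Pullback.

Definition ultra_hom n (A : talg n) (F : set A) (x : A) : wp n 'I_n (Sn_set n) :=
  exist (fun Z => forall q, Z q -> Sn_set n q)
    (fun q => Sn_set n q /\ F (subst_perm (fun_perm q) x)) (fun q => @proj1 _ _).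

Definition ultrafilters n (A : talg n) := {F : set A | ultrafilter F}.

Definition ultra_rep n (A : talg n) (x : A) :
    prod_alg (fun _ : ultrafilters A => wp n 'I_n (Sn_set n)) :=
  fun F => ultra_hom (sval F) x.

Section Representation.
Variables (n : nat) (A : talg n).
Hypothesis HS : Sigma A.

Lemma ultra_hom_is_hom (F : set A) : ultrafilter F -> is_hom (ultra_hom F).
Proof.
move=> uF; split; [|split] => [x y|x|i j ij x]; apply: wp_eq => q /=.
- by rewrite subst_perm_meet // ultra_meet //; tauto.
- by rewrite subst_perm_compl // ultra_compl //; tauto.
split=> [[Sq Fq]|[Sq [_ Fq]]]; split => //.
  split; first exact: permutable_Sn.
  by rewrite fun_perm_tperm ?subst_perm_tperm //; exact: bij_inj.
by move: Fq; rewrite fun_perm_tperm ?subst_perm_tperm //; exact: bij_inj.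
Qed.

Lemma ultra_hom_id (F : set A) x : sval (ultra_hom F x) id <-> F x.
Proof.
by rewrite /= fun_perm_id subst_perm1 //; split=> [[]|] // Fx; split => //; exists id.
Qed.

Lemma ultra_rep_hom : is_hom (@ultra_rep n A).
Proof. by apply: prod_hom => F; apply: ultra_hom_is_hom (proj2_sig F). Qed.

Lemma ultra_rep_inj : injective (@ultra_rep n A).
Proof.
move=> x y xy; apply: contrapT => /(ultrafilter_sep HS)[F uF []].
by rewrite -!(ultra_hom_id F) -[ultra_hom F x]/(ultra_rep x (exist _ F uF)) xy.
Qed.

Lemma Sigma_HSP_RTA : Hop (Sop (Pop (RTA n))) A.
Proof.
pose relativize := prod_map (fun _ : ultrafilters A => @restrict n 'I_n (Sn_set n)).
have rel_hom : is_hom relativize.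
  by apply: prod_map_hom => _; apply: restrict_hom (@permutable_Sn n).
have rel_surj : forall e, exists c, relativize c = e.
  by apply: prod_map_surj => _; apply: restrict_surj.
exists (pullback ultra_rep_hom rel_hom); split; last first.
  by exists (fun p => (sval p).1); split; [apply: pullback_fst_hom | apply: pullback_fst_surj].
exists (prod_alg (fun _ : ultrafilters A => fsa n 'I_n)); split.
  by apply: Pop_prod => _; apply: RTA_fsa.
exists (fun p => (sval p).2).
by split; [apply: pullback_snd_hom | apply/pullback_snd_inj/ultra_rep_inj].
Qed.

Lemma Sigma_PTA : PTA n A.
Proof.
exists (prod_alg (fun _ : ultrafilters A => wp n 'I_n (Sn_set n))); split.
  by apply: Pop_prod => _; apply/WpAlgs_wp/permutable_Sn.
by exists (@ultra_rep n A); split; [apply: ultra_rep_hom | apply: ultra_rep_inj].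
Qed.

Lemma Sigma_hom_Sn (a : A) : a <> meet a (compl a) ->
  exists h : A -> wp n 'I_n (Sn_set n), is_hom h /\ exists q, sval (h a) q.
Proof.
move=> a_neq0; have [F uF Fa] := ultrafilter_exists HS a_neq0.
by exists (ultra_hom F); split; [apply: ultra_hom_is_hom | exists id; apply/ultra_hom_id].
Qed.

End Representation.

Theorem theorem3p15 (n : nat) (hn : 2 <= n) :
  (forall A : talg n, TA n A <-> Hop (Sop (Pop (RTA n))) A) /\
  (forall A : talg n, TA n A <-> PTA n A) /\
  (forall A : talg n, Sigma A ->
     forall a : A, a <> meet a (compl a) ->
     exists h : A -> wp n 'I_n (Sn_set n), is_hom h /\ exists q, proj1_sig (h a) q).
Proof.
have HSP_RTA_Sigma : models_Sigma (Hop (Sop (Pop (RTA n)))).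
  exact/Hop_models/Sop_models/Pop_models/Sop_models/Pop_models/FullSetAlgs_models.
have PTA_Sigma : models_Sigma (PTA n) by apply/Sop_models/Pop_models/WpAlgs_models.
split; [|split] => A.
- by split; [apply: Sigma_HSP_RTA | apply: HSP_RTA_Sigma].
- by split; [apply: Sigma_PTA | apply: PTA_Sigma].
- exact: Sigma_hom_Sn.
Qed.
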